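(* Let $\mathscr{F}:\mathscr{C}_1\to\mathscr{C}_2$ be a functor, let $T_2$ be a Grothendieck topology on $\mathscr{C}_2$, and suppose $\mathscr{F}$ has dense image with respect to $T_2$ and $\mathscr{C}_2$ is extensive. Let $\mathcal{G}$ be a $T_2$-sheaf on $\mathscr{C}_2$. Then the presheaf morphism $\eta_{\mathcal{G}}:\mathcal{G}\to\mathscr{F}_*(\mathscr{F}^*\mathcal{G})$, which at an object $Y$ sends $s\in\mathcal{G}(Y)$ to the family $(\psi^*s)_{(X,\psi)\in\mathscr{F}/Y}$, is an isomorphism.
   Context: All categories are locally small. A Grothendieck topology $T$ on $\mathscr{C}$ assigns to each object $X$ a set of families $(\pi_i:U_i\to X)_{i\in I}$ (''coverings'') such that isomorphisms form singleton coverings, coverings of members of a covering compose to coverings, and coverings pull back (pullbacks existing) along arbitrary morphisms to coverings. A morphism is universal if its pullback along every morphism exists. A morphism $\pi:Y\to X$ is $T$-locally split if there is a covering $(\pi_i:U_i\to X)$ and morphisms $\rho_i:U_i\to Y$ with $\pi\circ\rho_i=\pi_i$. $\mathscr{F}:\mathscr{C}_1\to\mathscr{C}_2$ has dense image w.r.t. $T_2$ if it is fully faithful and for every object $X$ of $\mathscr{C}_2$ there exist objects $U_i$ ($i\in I$) of $\mathscr{C}_1$ and morphisms $\phi_i:\mathscr{F}(U_i)\to X$ such that $\coprod_i\mathscr{F}(U_i)$ exists and the induced $\coprod_i\mathscr{F}(U_i)\to X$ is universal and $T_2$-locally split. A category is extensive if it has an initial object, existing binary coproducts are disjoint, and existing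 coproducts are stable under pullback (pullbacks of coproduct injections along any morphism into the coproduct exist and exhibit the domain as their coproduct). A presheaf is a functor $\mathscr{C}^{op}\to\mathrm{Set}$; $f^*:=\mathcal{F}(f)$. It is extensive if it sends every existing coproduct to a product (canonical map $\mathcal{F}(\coprod X_i)\to\prod\mathcal{F}(X_i)$ bijective). A $T$-sheaf is an extensive presheaf such that for every universal $T$-locally split $\pi:Y\to X$, $\mathcal{F}(X)\to\mathcal{F}(Y)\rightrightarrows\mathcal{F}(Y\times_XY)$ is an equalizer. $\mathscr{F}^*\mathcal{G}=\mathcal{G}\circ\mathscr{F}$. For a presheaf $\mathcal{F}$ on $\mathscr{C}_1$ and $Y$ in $\mathscr{C}_2$, $\mathscr{F}/Y$ is the category of pairs $(X,\psi)$ with $\psi:\mathscr{F}(X)\to Y$ (morphisms $f:X_1\to X_2$ with $\psi_2\circ\mathscr{F}(f)=\psi_1$), and $(\mathscr{F}_*\mathcal{F})(Y)$ is the set of families $(s_{X,\psi}\in\mathcal{F}(X))_{(X,\psi)\in\mathscr{F}/Y}$ with $f^*s_{X_2,\psi_2}=s_{X_1,\psi_1}$ for all morphisms $f$ of $\mathscr{F}/Y$; a morphism $g:Y_1\to Y_2$ acts by $(s_{X,\psi})\mapsto(s_{X,g\circ\phi})_{(X,\phi)\in\mathscr{F}/Y_1}$. *)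

From Stdlib Require Import FunctionalExtensionality ProofIrrelevance.

Set Implicit Arguments.

Record Category := {
  Ob :> Type;
  Hom : Ob -> Ob -> Type;
  idm : forall X, Hom X X;
  comp : forall X Y Z, Hom Y Z -> Hom X Y -> Hom X Z;
  comp_id_l : forall X Y (f : Hom X Y), comp (idm Y) f = f;
  comp_id_r : forall X Y (f : Hom X Y), comp f (idm X) = f;
  comp_assoc : forall W X Y Z (h : Hom Y Z) (g : Hom X Y) (f : Hom W X),
      comp h (comp g f) = comp (comp h g) f
}.
Arguments Hom {c} X Y.
Arguments idm {c} X.
Arguments comp {c X Y Z} g f.

Section CatNotions.
Context {C : Category}.

Definition is_iso {X Y : C} (f : Hom X Y) : Prop :=
  exists g : Hom Y X, comp g f = idm X /\ comp f g = idm Y.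

Definition is_initial (Z : C) : Prop :=
  forall X : C, exists f : Hom Z X, forall g : Hom Z X, g = f.

Definition is_pullback {X Y Z : C} (f : Hom X Z) (g : Hom Y Z)
  (P : C) (p1 : Hom P X) (p2 : Hom P Y) : Prop :=
  comp f p1 = comp g p2 /\
  forall (W : C) (a : Hom W X) (b : Hom W Y), comp f a = comp g b ->
    exists! h : Hom W P, comp p1 h = a /\ comp p2 h = b.

Definition is_coproduct {I : Type} (Xs : I -> C) {S : C}
  (inj : forall i, Hom (Xs i) S) : Prop :=
  forall (Z : C) (f : forall i, Hom (Xs i) Z),
    exists! h : Hom S Z, forall i, comp h (inj i) = f i.

Definition is_bin_coproduct {A B S : C} (i1 : Hom A S) (i2 : Hom B S) : Prop :=
  forall (Z : C) (f : Hom A Z) (g : Hom B Z),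
    exists! h : Hom S Z, comp h i1 = f /\ comp h i2 = g.

Definition universal {Y X : C} (p : Hom Y X) : Prop :=
  forall (X' : C) (g : Hom X' X), exists (P : C) (p1 : Hom P Y) (p2 : Hom P X'),
    is_pullback p g P p1 p2.

Definition extensive : Prop :=
  (exists Z : C, is_initial Z) /\
  (forall (A B S : C) (i1 : Hom A S) (i2 : Hom B S), is_bin_coproduct i1 i2 ->
     (exists (P : C) (p1 : Hom P A) (p2 : Hom P B), is_pullback i1 i2 P p1 p2) /\
     (forall (P : C) (p1 : Hom P A) (p2 : Hom P B),
         is_pullback i1 i2 P p1 p2 -> is_initial P)) /\
  (forall (I : Type) (Xs : I -> C) (S : C) (inj : forall i, Hom (Xs i) S),
     is_coproduct Xs inj ->
     forall (Y : C) (g : Hom Y S),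
       (forall i, exists (P : C) (p1 : Hom P (Xs i)) (p2 : Hom P Y),
           is_pullback (inj i) g P p1 p2) /\
       (forall (P : I -> C) (p1 : forall i, Hom (P i) (Xs i))
               (p2 : forall i, Hom (P i) Y),
           (forall i, is_pullback (inj i) g (P i) (p1 i) (p2 i)) ->
           is_coproduct P p2)).

Record Family (X : C) := {
  fam_I : Type;
  fam_U : fam_I -> C;
  fam_map : forall i, Hom (fam_U i) X
}.

(** Grothendieck topology: T X is the set of coverings of X *)
Definition is_topology (T : forall X : C, Family X -> Prop) : Prop :=
  (forall (X Y : C) (f : Hom Y X), is_iso f ->
     T X {| fam_I := unit; fam_U := fun _ => Y; fam_map := fun _ => f |}) /\
  (forall (X : C) (U : Family X), T X U ->
     forall V : forall i, Family (fam_U U i), (forall i, T (fam_U U i) (V i)) ->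
     T X {| fam_I := { i : fam_I U & fam_I (V i) };
            fam_U := fun ij => fam_U (V (projT1 ij)) (projT2 ij);
            fam_map := fun ij => comp (fam_map U (projT1 ij))
                                      (fam_map (V (projT1 ij)) (projT2 ij)) |}) /\
  (forall (X : C) (U : Family X), T X U ->
     forall (Y : C) (g : Hom Y X),
       (forall i, exists (P : C) (p1 : Hom P (fam_U U i)) (p2 : Hom P Y),
           is_pullback (fam_map U i) g P p1 p2) /\
       (forall (P : fam_I U -> C) (p1 : forall i, Hom (P i) (fam_U U i))
               (p2 : forall i, Hom (P i) Y),
           (forall i, is_pullback (fam_map U i) g (P i) (p1 i) (p2 i)) ->
           T Y {| fam_I := fam_I U; fam_U := P; fam_map := p2 |})).

Definition locally_split (T : forall X : C, Family X -> Prop)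
  {Y X : C} (p : Hom Y X) : Prop :=
  exists U : Family X, T X U /\
    exists rho : forall i, Hom (fam_U U i) Y,
      forall i, comp p (rho i) = fam_map U i.

End CatNotions.
Arguments extensive C : clear implicits.
Arguments Family {C} X.

Unset Implicit Arguments.
Record Functor (C D : Category) := {
  F_ob :> Ob C -> Ob D;
  F_map : forall X Y : C, Hom X Y -> Hom (F_ob X) (F_ob Y);
  F_id : forall X, F_map _ _ (idm X) = idm (F_ob X);
  F_comp : forall X Y Z (g : Hom Y Z) (f : Hom X Y),
      F_map _ _ (comp g f) = comp (F_map _ _ g) (F_map _ _ f)
}.
Set Implicit Arguments.
Arguments F_map {C D} _ {X Y} _.

Definition fully_faithful {C D : Category} (F : Functor C D) : Prop :=
  forall X Y : C,
    (forall f g : Hom X Y, F_map F f = F_map F g -> f = g) /\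
    (forall h : Hom (F X) (F Y), exists f : Hom X Y, F_map F f = h).

Definition dense_image {C1 C2 : Category} (F : Functor C1 C2)
  (T2 : forall X : C2, Family X -> Prop) : Prop :=
  fully_faithful F /\
  forall X : C2, exists (I : Type) (U : I -> C1) (phi : forall i, Hom (F (U i)) X)
    (S : C2) (inj : forall i, Hom (F (U i)) S) (h : Hom S X),
    is_coproduct (fun i => F (U i)) inj /\
    (forall i, comp h (inj i) = phi i) /\
    universal h /\ locally_split T2 h.

(** * Presheaves (functors C^op -> Set) *)
Unset Implicit Arguments.
Record Presheaf (C : Category) := {
  P_ob :> Ob C -> Type;
  P_map : forall X Y : C, Hom X Y -> P_ob Y -> P_ob X;
  P_id : forall (X : C) s, P_map X X (idm X) s = s;
  P_comp : forall (X Y Z : C) (g : Hom Y Z) (f : Hom X Y) s,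
      P_map X Z (comp g f) s = P_map X Y f (P_map Y Z g s)
}.
Set Implicit Arguments.
Arguments P_map {C} _ {X Y} _ _.

Definition extensive_presheaf {C : Category} (G : Presheaf C) : Prop :=
  forall (I : Type) (Xs : I -> C) (S : C) (inj : forall i, Hom (Xs i) S),
    is_coproduct Xs inj ->
    (forall s t : G S,
        (fun i => P_map G (inj i) s) = (fun i => P_map G (inj i) t) -> s = t) /\
    (forall t : forall i, G (Xs i), exists s : G S, (fun i => P_map G (inj i) s) = t).

Definition is_set_equalizer {A B D : Type} (e : A -> B) (f g : B -> D) : Prop :=
  (forall a, f (e a) = g (e a)) /\
  (forall a a', e a = e a' -> a = a') /\
  (forall b, f b = g b -> exists a, e a = b).

Definition is_sheaf {C : Category} (T : forall X : C, Family X -> Prop)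
  (G : Presheaf C) : Prop :=
  extensive_presheaf G /\
  forall (Y X : C) (p : Hom Y X), universal p -> locally_split T p ->
    forall (P : C) (p1 : Hom P Y) (p2 : Hom P Y), is_pullback p p P p1 p2 ->
      is_set_equalizer (P_map G p) (P_map G p1) (P_map G p2).

Record PMor {C : Category} (P Q : Presheaf C) := {
  pm :> forall X : C, P X -> Q X;
  pm_nat : forall (X Y : C) (f : Hom X Y) s,
    pm X (P_map P f s) = P_map Q f (pm Y s)
}.

Definition PIso {C : Category} {P Q : Presheaf C} (m : PMor P Q) : Prop :=
  exists n : PMor Q P,
    (forall X s, n X (m X s) = s) /\ (forall X s, m X (n X s) = s).

Lemma sig_eq_irr {A : Type} {Pr : A -> Prop} (a b : sig Pr) :
  proj1_sig a = proj1_sig b -> a = b.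
Proof.
  destruct a as [a Ha], b as [b Hb]; simpl; intros ->.
  f_equal; apply proof_irrelevance.
Qed.

Unset Implicit Arguments.
Section PullPush.
Variables (C1 C2 : Category) (F : Functor C1 C2).

Definition pull_presheaf (G : Presheaf C2) : Presheaf C1.
Proof.
  refine {| P_ob := fun X => G (F X);
            P_map := fun X Y f s => P_map G (F_map F f) s |}.
  - intros X s; rewrite F_id; apply P_id.
  - intros X Y Z g f s; rewrite F_comp; apply P_comp.
Defined.

Definition slice (Y : C2) := { X : C1 & Hom (F X) Y }.

Definition push_ob (P : Presheaf C1) (Y : C2) : Type :=
  { s : forall x : slice Y, P (projT1 x) |
    forall (X1 X2 : C1) (psi1 : Hom (F X1) Y) (psi2 : Hom (F X2) Y) (f : Hom X1 X2),
      comp psi2 (F_map F f) = psi1 ->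
      P_map P f (s (existT _ X2 psi2)) = s (existT _ X1 psi1) }.

Definition push_map (P : Presheaf C1) {Y1 Y2 : C2} (g : Hom Y1 Y2) :
  push_ob P Y2 -> push_ob P Y1.
Proof.
  intros s.
  exists (fun x => proj1_sig s (existT _ (projT1 x) (comp g (projT2 x)))).
  intros X1 X2 psi1 psi2 f H; simpl.
  apply (proj2_sig s). simpl. rewrite <- comp_assoc, H. reflexivity.
Defined.

Definition push_presheaf (P : Presheaf C1) : Presheaf C2.
Proof.
  refine {| P_ob := push_ob P; P_map := fun Y1 Y2 g s => push_map P g s |}.
  - intros X s; apply sig_eq_irr; simpl.
    apply functional_extensionality_dep; intros [X' psi]; simpl.
    rewrite comp_id_l; reflexivity.
  - intros X Y Z g f s; apply sig_eq_irr; simpl.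
    apply functional_extensionality_dep; intros [X' psi]; simpl.
    rewrite comp_assoc; reflexivity.
Defined.

Definition eta_comp (G : Presheaf C2) (Y : C2) (s : G Y) :
  push_presheaf (pull_presheaf G) Y.
Proof.
  exists (fun x : slice Y => P_map G (projT2 x) s).
  intros X1 X2 psi1 psi2 f H; simpl.
  rewrite <- P_comp, H; reflexivity.
Defined.

Definition eta (G : Presheaf C2) : PMor G (push_presheaf (pull_presheaf G)).
Proof.
  refine {| pm := eta_comp G |}.
  intros X Y f s; apply sig_eq_irr; simpl.
  apply functional_extensionality_dep; intros [X' psi]; simpl.
  symmetry; apply P_comp.
Defined.

End PullPush.
Arguments eta {C1 C2} F G.

(* Cover Y by the
   universal, locally split map h : coprod_i F(U_i) -> Y given by density.
   Extensivity of G assembles the components s_(U_i, phi_i) into one section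
   s' over the coproduct; since coproducts in C2 are stable under pullback,
   s' agrees with s after restriction to every F(X) -> coprod_i F(U_i), and
   the sheaf condition for h (with full faithfulness of F to compare the two
   pullbacks of s') descends s' to a section t over Y.  Every section over a
   base Z is determined by its restrictions along maps F(X) -> Z, so t is the
   unique preimage of s and eta_G is bijective. *)
From Stdlib Require Import FunctionalExtensionality IndefiniteDescription.

Section Pullbacks.
Context {C : Category}.

Lemma pullback_hom_ext {X Y Z P : C} {f : Hom X Z} {g : Hom Y Z}
  {p1 : Hom P X} {p2 : Hom P Y} : is_pullback f g P p1 p2 ->
  forall W (u v : Hom W P), comp p1 u = comp p1 v -> comp p2 u = comp p2 v -> u = v.
Proof.
  intros [Hsq Hup] W u v H1 H2.
  destruct (Hup W (comp p1 v) (comp p2 v)) as [h [_ Hh]].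
  - rewrite !comp_assoc, Hsq; reflexivity.
  - rewrite <- (Hh u (conj H1 H2)); apply Hh; split; reflexivity.
Qed.

Lemma pullback_lift {X Y Z P : C} {f : Hom X Z} {g : Hom Y Z}
  {p1 : Hom P X} {p2 : Hom P Y} : is_pullback f g P p1 p2 ->
  forall W (a : Hom W X) (b : Hom W Y), comp f a = comp g b ->
  {h : Hom W P | comp p1 h = a /\ comp p2 h = b}.
Proof.
  intros [_ Hup] W a b H; apply constructive_indefinite_description.
  destruct (Hup W a b H) as [h [Hh _]]; exists h; exact Hh.
Qed.

Lemma pullbacks_of_family {I : Type} (A : I -> C) {B Z : C}
  (f : forall i, Hom (A i) B) (g : Hom Z B) :
  (forall i, exists P p1 p2, is_pullback (f i) g P p1 p2) ->
  exists (P : I -> C) (p1 : forall i, Hom (P i) (A i)) (p2 : forall i, Hom (P i) Z),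
    forall i, is_pullback (f i) g (P i) (p1 i) (p2 i).
Proof.
  intro Hex.
  assert (Hpb : forall i, {t : {P : C & (Hom P (A i) * Hom P Z)%type} |
     is_pullback (f i) g (projT1 t) (fst (projT2 t)) (snd (projT2 t))}).
  { intro i; apply constructive_indefinite_description.
    destruct (Hex i) as (P & p1 & p2 & HP); exists (existT _ P (p1, p2)); exact HP. }
  exists (fun i => projT1 (proj1_sig (Hpb i))),
    (fun i => fst (projT2 (proj1_sig (Hpb i)))),
    (fun i => snd (projT2 (proj1_sig (Hpb i)))).
  intro i; exact (proj2_sig (Hpb i)).
Qed.

Section PullbackStability.
Context {Z' Z X Q : C} {k : Hom Z' Z} {chi : Hom X Z}
  {q1 : Hom Q Z'} {q2 : Hom Q X}.
Hypothesis Hpb : is_pullback k chi Q q1 q2.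

(* The pullback of [k] along [chi ∘ g] is also the pullback of [q2] along [g]
   (pasting of pullback squares). *)
Lemma universal_pullback : universal k -> universal q2.
Proof.
  intros Hk W g.
  destruct (Hk W (comp chi g)) as (R & r1 & r2 & HR).
  destruct (pullback_lift Hpb R r1 (comp g r2)) as [r [Hr1 Hr2]].
  { rewrite (proj1 HR); symmetry; apply comp_assoc. }
  exists R, r, r2; split; [exact Hr2 |].
  intros W' a b Hab.
  destruct (proj2 HR W' (comp q1 a) b) as [u [[Hu1 Hu2] Huniq]].
  { rewrite comp_assoc, (proj1 Hpb), <- comp_assoc, Hab, comp_assoc; reflexivity. }
  exists u; split.
  - split; [| exact Hu2].
    apply (pullback_hom_ext Hpb).
    + rewrite comp_assoc, Hr1, Hu1; reflexivity.
    + rewrite comp_assoc, Hr2, <- comp_assoc, Hu2; symmetry; exact Hab.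
  - intros u' [H1 H2]; apply Huniq; split; [| exact H2].
    rewrite <- H1, comp_assoc, Hr1; reflexivity.
Qed.

Lemma locally_split_pullback (T : forall X : C, Family X -> Prop) :
  is_topology T -> locally_split T k -> locally_split T q2.
Proof.
  intros (_ & _ & HTpb) (U & HU & rho & Hrho).
  destruct (HTpb Z U HU X chi) as [Hex Hcov].
  destruct (pullbacks_of_family _ _ _ Hex) as (P & a & b & Hab).
  exists {| fam_I := fam_I U; fam_U := P; fam_map := b |}; split.
  - exact (Hcov P a b Hab).
  - assert (Hsq : forall i, comp k (comp (rho i) (a i)) = comp chi (b i)).
    { intro i; rewrite comp_assoc, Hrho; exact (proj1 (Hab i)). }
    exists (fun i => proj1_sig (pullback_lift Hpb _ _ _ (Hsq i))).
    intro i; exact (proj2 (proj2_sig (pullback_lift Hpb _ _ _ (Hsq i)))).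
Qed.

End PullbackStability.
End Pullbacks.

Section Sheaves.
Context {C : Category} (T : forall X : C, Family X -> Prop) (G : Presheaf C).
Hypothesis HG : is_sheaf T G.

Lemma sheaf_restriction_inj {Y X : C} (p : Hom Y X) :
  universal p -> locally_split T p ->
  forall a b : G X, P_map G p a = P_map G p b -> a = b.
Proof.
  intros Hu Hls.
  destruct (Hu Y p) as (P & p1 & p2 & Hpb).
  exact (proj1 (proj2 (proj2 HG Y X p Hu Hls P p1 p2 Hpb))).
Qed.

Lemma sheaf_descent {Y X P : C} (p : Hom Y X) (p1 p2 : Hom P Y) :
  universal p -> locally_split T p -> is_pullback p p P p1 p2 ->
  forall s : G Y, P_map G p1 s = P_map G p2 s -> exists t, P_map G p t = s.
Proof.
  intros Hu Hls Hpb; exact (proj2 (proj2 (proj2 HG Y X p Hu Hls P p1 p2 Hpb))).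
Qed.

Lemma sheaf_coproduct_ext {I : Type} (Xs : I -> C) {S : C}
  (inj : forall i, Hom (Xs i) S) : is_coproduct Xs inj ->
  forall a b : G S, (forall i, P_map G (inj i) a = P_map G (inj i) b) -> a = b.
Proof.
  intros Hcop a b Hab.
  apply (proj1 (proj1 HG I Xs S inj Hcop)).
  apply functional_extensionality_dep; exact Hab.
Qed.

Lemma sheaf_coproduct_glue {I : Type} (Xs : I -> C) {S : C}
  (inj : forall i, Hom (Xs i) S) : is_coproduct Xs inj ->
  forall t : forall i, G (Xs i), exists s : G S, forall i, P_map G (inj i) s = t i.
Proof.
  intros Hcop t.
  destruct (proj2 (proj1 HG I Xs S inj Hcop) t) as [s Hs].
  exists s; intro i; rewrite <- Hs; reflexivity.
Qed.

End Sheaves.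

Section Reconstruction.
Context (C1 C2 : Category) (F : Functor C1 C2)
  (T2 : forall X : C2, Family X -> Prop) (HT2 : is_topology T2)
  (Hdense : dense_image F T2) (Hext : extensive C2)
  (G : Presheaf C2) (HG : is_sheaf T2 G).

Lemma sheaf_ext_on_image {Z : C2} (a b : G Z) :
  (forall X (chi : Hom (F X) Z), P_map G chi a = P_map G chi b) -> a = b.
Proof.
  intros Hab.
  destruct (proj2 Hdense Z) as (I & U & phi & S & inj & h & Hcop & Hphi & Hu & Hls).
  apply (sheaf_restriction_inj T2 G HG h Hu Hls).
  apply (sheaf_coproduct_ext T2 G HG _ inj Hcop); intro i.
  rewrite <- !P_comp; apply Hab.
Qed.

Notation FG := (push_presheaf C1 C2 F (pull_presheaf C1 C2 F G)).

Definition component {Y : C2} (s : FG Y) (X : C1) (psi : Hom (F X) Y) : G (F X) :=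
  proj1_sig s (existT _ X psi).

Definition represents {Y : C2} (s : FG Y) {Z : C2} (z : Hom Z Y) (a : G Z) : Prop :=
  forall X (chi : Hom (F X) Z), P_map G chi a = component s X (comp z chi).

Lemma represents_unique {Y Z : C2} {s : FG Y} {z1 z2 : Hom Z Y} {a b : G Z} :
  represents s z1 a -> represents s z2 b -> z1 = z2 -> a = b.
Proof.
  intros Ha Hb <-; apply sheaf_ext_on_image; intros X chi.
  rewrite Ha, Hb; reflexivity.
Qed.

Lemma represents_restrict {Y Z Z' : C2} {s : FG Y} {z : Hom Z Y} {a : G Z}
  (g : Hom Z' Z) : represents s z a -> represents s (comp z g) (P_map G g a).
Proof.
  intros Ha X chi; rewrite <- P_comp, Ha, comp_assoc; reflexivity.
Qed.

(* Fullness of [F] writes every [chi : F X -> F X0] as [F f], and the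
   compatibility of [s] along [f] is exactly the required identity. *)
Lemma represents_component {Y : C2} (s : FG Y) (X0 : C1) (psi : Hom (F X0) Y) :
  represents s psi (component s X0 psi).
Proof.
  intros X chi.
  destruct (proj2 (proj1 Hdense X X0) chi) as [f <-].
  exact (proj2_sig s X X0 _ psi f eq_refl).
Qed.

Lemma represents_descend {Y Z Z' : C2} {s : FG Y} {k : Hom Z' Z} {z : Hom Z Y}
  {a : G Z} : universal k -> locally_split T2 k ->
  represents s (comp z k) (P_map G k a) -> represents s z a.
Proof.
  intros Hu Hls Ha X chi.
  destruct (Hu _ chi) as (Q & q1 & q2 & Hpb).
  apply (sheaf_restriction_inj T2 G HG q2 (universal_pullback Hpb Hu)
           (locally_split_pullback Hpb T2 HT2 Hls)).
  rewrite <- P_comp, <- (proj1 Hpb), P_comp.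
  apply (represents_unique (represents_restrict q1 Ha)
           (represents_restrict q2 (represents_component s X (comp z chi)))).
  rewrite <- !comp_assoc, (proj1 Hpb); reflexivity.
Qed.

(* Pulling the coproduct back along [h ∘ chi] decomposes [F X] into pieces on
   which both sides are compared via [represents_component]. *)
Lemma represents_on_coproduct {Y S : C2} (s : FG Y) {I : Type} (U : I -> C1)
  (phi : forall i, Hom (F (U i)) Y) (inj : forall i, Hom (F (U i)) S)
  (h : Hom S Y) (s' : G S) :
  is_coproduct (fun i => F (U i)) inj -> (forall i, comp h (inj i) = phi i) ->
  (forall i, P_map G (inj i) s' = component s (U i) (phi i)) ->
  represents s h s'.
Proof.
  intros Hcop Hphi Hs' X chi.
  destruct (proj2 (proj2 Hext) _ _ _ _ Hcop (F X) chi) as [Hex Hstable].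
  destruct (pullbacks_of_family _ _ _ Hex) as (P & p1 & p2 & Hpb).
  apply (sheaf_coproduct_ext T2 G HG _ p2 (Hstable P p1 p2 Hpb)); intro i.
  rewrite <- P_comp, <- (proj1 (Hpb i)), P_comp, Hs'.
  apply (represents_unique (represents_restrict (p1 i) (represents_component s (U i) (phi i)))
           (represents_restrict (p2 i) (represents_component s X (comp h chi)))).
  rewrite <- (Hphi i), <- !comp_assoc, (proj1 (Hpb i)); reflexivity.
Qed.

Lemma represents_exists {Y : C2} (s : FG Y) : exists t : G Y, represents s (idm Y) t.
Proof.
  destruct (proj2 Hdense Y) as (I & U & phi & S & inj & h & Hcop & Hphi & Hu & Hls).
  destruct (sheaf_coproduct_glue T2 G HG _ inj Hcop (fun i => component s (U i) (phi i)))
    as [s' Hs'].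
  pose proof (represents_on_coproduct s U phi inj h s' Hcop Hphi Hs') as Hrep.
  destruct (Hu S h) as (P & q1 & q2 & Hpb).
  destruct (sheaf_descent T2 G HG h q1 q2 Hu Hls Hpb s') as [t Ht].
  { exact (represents_unique (represents_restrict q1 Hrep) (represents_restrict q2 Hrep)
             (proj1 Hpb)). }
  exists t; apply (represents_descend Hu Hls).
  rewrite Ht, comp_id_l; exact Hrep.
Qed.

Definition glue {Y : C2} (s : FG Y) : G Y :=
  proj1_sig (constructive_indefinite_description _ (represents_exists s)).

Lemma glue_represents {Y : C2} (s : FG Y) : represents s (idm Y) (glue s).
Proof. exact (proj2_sig (constructive_indefinite_description _ (represents_exists s))). Qed.

Lemma glue_natural (Y1 Y2 : C2) (f : Hom Y1 Y2) (s : FG Y2) :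
  glue (P_map FG f s) = P_map G f (glue s).
Proof.
  apply (represents_unique (glue_represents _) (z2 := idm Y1)); [| reflexivity].
  intros X chi; rewrite <- P_comp, (glue_represents s).
  unfold component; simpl; rewrite !comp_id_l; reflexivity.
Qed.

Definition eta_inv : PMor FG G := {| pm := @glue; pm_nat := glue_natural |}.

Lemma glue_eta (Y : C2) (a : G Y) : glue (eta F G Y a) = a.
Proof.
  apply (represents_unique (glue_represents _) (z2 := idm Y)); [| reflexivity].
  intros X chi; unfold component; simpl; rewrite comp_id_l; reflexivity.
Qed.

Lemma eta_glue (Y : C2) (s : FG Y) : eta F G Y (glue s) = s.
Proof.
  apply sig_eq_irr, functional_extensionality_dep; intros [X psi]; simpl.
  pose proof (glue_represents s X psi) as Hs; rewrite comp_id_l in Hs; exact Hs.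
Qed.

End Reconstruction.

Theorem mainTheorem2 (C1 C2 : Category) (F : Functor C1 C2)
  (T2 : forall X : C2, Family X -> Prop) (HT2 : is_topology T2)
  (Hdense : dense_image F T2) (Hext : extensive C2)
  (G : Presheaf C2) (HG : is_sheaf T2 G) :
  PIso (eta F G).
Proof.
  exists (eta_inv C1 C2 F T2 HT2 Hdense Hext G HG); split.
  - apply glue_eta.
  - apply eta_glue.
Qed.
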